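(* For every group $G$ and every positive integer $n$, the number of tuples $(g_1,\dots,g_n)\in G^n$ such that $\langle g_1,\dots,g_n\rangle=G$ is divisible by $|G'|$, the order of the commutator subgroup of $G$.
   Context: Groups need not be finite; divisibility is understood in the sense of cardinal arithmetic: an infinite cardinal is divisible by every nonzero cardinal not exceeding it. *)

From mathcomp Require Import all_boot.
From mathcomp Require Import monoid.

Set Implicit Arguments.
Unset Strict Implicit.
Unset Printing Implicit Defensive.

Local Open Scope group_scope.

Definition is_subgroup (G : groupType) (S : G -> Prop) : Prop :=
  S 1 /\ (forall x y, S x -> S y -> S (x * y^-1)).

Definition generated (G : groupType) (A : G -> Prop) : G -> Prop :=
  fun x => forall S : G -> Prop, is_subgroup S -> (forall a, A a -> S a) -> S x.

Definition derived_subgroup (G : groupType) : G -> Prop :=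
  generated (fun c : G => exists x y : G, c = [~ x, y]).

Definition generating_tuples (G : groupType) (n : nat) : ('I_n -> G) -> Prop :=
  fun g => forall x : G, generated (fun a : G => exists i : 'I_n, a = g i) x.

(* Cardinal divisibility: |A| divides |B| iff |B| = |A| * |C| for some
   cardinal |C|, i.e. B is in bijection with A x C for some type C. *)
Definition card_dvd (X Y : Type) (A : X -> Prop) (B : Y -> Prop) : Prop :=
  exists (C : Type) (f : {x : X | A x} * C -> {y : Y | B y}), bijective f.

From mathcomp Require Import all_boot.
From mathcomp Require Import monoid.
From Stdlib Require Import ClassicalEpsilon FunctionalExtensionality.
From Stdlib Require Import PropExtensionality ProofIrrelevance.

(** Let [N] be the set of elements of [G'] that are non-generators of [G];
    it is a normal subgroup of [G].  Call two [n]-tuples equivalent when one is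
    a conjugate of the other by an element of [G'], up to componentwise
    multiplication by elements of [N].  On generating tuples this action of
    [G'/N] is free: if [s] in [G'] fixes every generator modulo [N], then [s] is
    central modulo [N], and, as in Gaschuetz's proof that [Z(G) :&: G'] lies in
    the Frattini subgroup, such an [s] is a non-generator (here finite
    generation is needed to discard the non-generators one at a time).  Since
    multiplying a generating tuple by a tuple from [N] keeps it generating, each
    class of generating tuples has [|G'/N| * |N|^n = |G'| * |N|^(n-1)]
    elements, which yields a bijection between [G' x N^(n-1) x classes] and the
    generating tuples. *)

Set Implicit Arguments.
Unset Strict Implicit.
Unset Printing Implicit Defensive.

Local Open Scope group_scope.

Section Generation.

Variable G : groupType.
Implicit Types (A B C S : G -> Prop) (x y u : G).

Lemma subgroup1 S : is_subgroup S -> S 1.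
Proof. by case. Qed.

Lemma subgroupV S x : is_subgroup S -> S x -> S x^-1.
Proof. by case=> S1 SD Sx; rewrite -[x^-1]mul1g; apply: SD. Qed.

Lemma subgroupM S x y : is_subgroup S -> S x -> S y -> S (x * y).
Proof. by move=> sS Sx Sy; rewrite -[y]invgK; apply: sS.2 => //; apply: subgroupV. Qed.

Lemma subgroupJ S x u : is_subgroup S -> S x -> S u -> S (x ^ u).
Proof.
move=> sS Sx Su; rewrite conjgE.
by apply: subgroupM (subgroupV _ _) (subgroupM _ _ _).
Qed.

Lemma normalizer_subgroup S : is_subgroup (fun u => forall k, S (k ^ u) <-> S k).
Proof.
split=> [k | u v nu nv k]; first by rewrite conjg1.
have := nv ((k ^ u) ^ v^-1); rewrite conjgKV conjgM => e.
exact: iff_trans (iff_sym e) (nu k).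
Qed.

Lemma generated_subgroup A : is_subgroup (generated A).
Proof.
split=> [S [S1 _] // | x y Ax Ay S sS AS].
by apply: sS.2; [apply: Ax | apply: Ay].
Qed.

Lemma mem_generated A a : A a -> generated A a.
Proof. by move=> Aa S _; apply. Qed.

Lemma generated_min A S x :
  is_subgroup S -> (forall a, A a -> S a) -> generated A x -> S x.
Proof. by move=> sS AS; apply. Qed.

Lemma generated_mono A A' x :
  (forall a, A a -> A' a) -> generated A x -> generated A' x.
Proof. by move=> AA' Ax S sS A'S; apply: Ax => // a /AA'/A'S. Qed.

Definition generates A := forall x, generated A x.

Lemma generates_trans A' A :
  generates A' -> (forall a, A' a -> generated A a) -> generates A.
Proof. by move=> genA' A'A x; apply: generated_min (generated_subgroup A) A'A (genA' x). Qed.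

Lemma generated_conj A u x :
  generated A x -> generated (fun y => exists2 a, A a & y = a ^ u) (x ^ u).
Proof.
move=> Ax S sS AS; apply: (generated_min (S := fun z => S (z ^ u))) Ax.
  split=> [|y z Sy Sz]; first by rewrite conj1g; apply: subgroup1.
  by rewrite conjMg conjVg; apply: sS.2.
by move=> a Aa; apply: AS; exists a.
Qed.

Lemma generates_conj A u :
  generates A -> generates (fun y => exists2 a, A a & y = a ^ u).
Proof. by move=> genA x; rewrite -(conjgKV u x); apply: generated_conj. Qed.

Lemma generated_finite_support A C x : generated (fun y => A y \/ C y) x ->
  exists2 l : seq G, {in l, forall c, C c} & generated (fun y => A y \/ y \in l) x.
Proof.
pose finitely_generated z :=
  exists2 l : seq G, {in l, forall c, C c} & generated (fun y => A y \/ y \in l) z.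
apply: (generated_min (S := finitely_generated)) => [|a [Aa | Ca]].
- split=> [|y z [l Cl gy] [l' Cl' gz]].
    by exists [::] => //; apply: subgroup1 (generated_subgroup _).
  exists (l ++ l') => [c | ]; first by rewrite mem_cat => /orP[/Cl | /Cl'].
  apply: (generated_subgroup _).2.
    by apply: generated_mono gy => y' [Ay' | ly']; [left | right; rewrite mem_cat ly'].
  by apply: generated_mono gz => y' [Ay' | ly']; [left | right; rewrite mem_cat ly' orbT].
- by exists [::] => //; apply: mem_generated; left.
- exists [:: a] => [c | ]; first by rewrite inE => /eqP ->.
  by apply: mem_generated; right; rewrite inE.
Qed.

Lemma generated_finite_support_seq A C (s : seq G) :
  {in s, forall x, generated (fun y => A y \/ C y) x} ->
  exists2 l : seq G, {in l, forall c, C c} &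
    {in s, forall x, generated (fun y => A y \/ y \in l) x}.
Proof.
elim: s => [|x s IHs] gen_s; first by exists [::].
have /IHs[l Cl gen_l] : {in s, forall y, generated (fun y => A y \/ C y) y}.
  by move=> y sy; apply: gen_s; rewrite inE sy orbT.
have [l' Cl' gen_x] := generated_finite_support (gen_s x (mem_head x s)).
exists (l ++ l') => [c | y]; first by rewrite mem_cat => /orP[/Cl | /Cl'].
rewrite inE => /orP[/eqP -> | sy].
  by apply: generated_mono gen_x => y' [Ay' | ly']; [left | right; rewrite mem_cat ly' orbT].
by apply: generated_mono (gen_l y sy) => y' [Ay' | ly']; [left | right; rewrite mem_cat ly'].
Qed.

Definition nongenerator c := forall B, generates (fun y => B y \/ y = c) -> generates B.

Lemma generates_remove_nongenerators B (l : seq G) :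
  {in l, forall c, nongenerator c} -> generates (fun y => B y \/ y \in l) -> generates B.
Proof.
elim: l B => [|c l IHl] B ng_l gen_Bl.
  by apply: (generates_trans gen_Bl) => y [By | //]; apply: mem_generated.
apply: (ng_l c (mem_head c l)); apply: IHl => [d ld | ].
  by apply: ng_l; rewrite inE ld orbT.
apply: (generates_trans gen_Bl) => y [By | /[!inE]/orP[/eqP -> | ly]];
  apply: mem_generated.
- by left; left.
- by left; right.
- by right.
Qed.

Lemma fg_generates_remove_nongenerators (s : seq G) B :
  generates (fun y => y \in s) ->
  generates (fun y => B y \/ nongenerator y) -> generates B.
Proof.
move=> gen_s gen_BN.
have [l ng_l gen_l] := generated_finite_support_seq (s := s) (fun x _ => gen_BN x).
exact: generates_remove_nongenerators ng_l (generates_trans gen_s gen_l).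
Qed.

Definition normal S := forall u x, S x -> S (x ^ u).

Lemma nongenerator_subgroup : is_subgroup nongenerator.
Proof.
have remove_redundant c B : generated B c -> generates (fun y => B y \/ y = c) -> generates B.
  by move=> Bc gen_Bc; apply: (generates_trans gen_Bc) => y [By | ->] //; apply: mem_generated.
split=> [B | c d ng_c ng_d B gen_Bcd].
  by apply: remove_redundant; apply: subgroup1 (generated_subgroup _).
apply: (ng_c B) (ng_d (fun y => B y \/ y = c) _); apply: (generates_trans gen_Bcd) => y [By | ->].
  by apply: mem_generated; left; left.
by apply: (generated_subgroup _).2; apply: mem_generated; [left; right | right].
Qed.

Lemma nongenerator_normal : normal nongenerator.
Proof.
move=> u c ng_c B gen_Bcu.
have gen_Bc : generates (fun y => (exists2 b, B b & y = b ^ u^-1) \/ y = c).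
  apply: (generates_trans (generates_conj (u := u^-1) gen_Bcu)) => _ [y [By | ->] ->].
    by apply: mem_generated; left; exists y.
  by rewrite conjgK; apply: mem_generated; right.
apply: (generates_trans (generates_conj (u := u) (ng_c _ gen_Bc))) => _ [_ [b Bb ->] ->].
by rewrite conjgKV; apply: mem_generated.
Qed.

Definition eqmod S a b := S (a * b^-1).

Section Congruence.

Variable S : G -> Prop.
Hypothesis subS : is_subgroup S.

Lemma eqmod_refl x : eqmod S x x.
Proof. by rewrite /eqmod mulgV; apply: subgroup1. Qed.

Lemma eqmod_sym x y : eqmod S x y -> eqmod S y x.
Proof. by move/(subgroupV subS); rewrite invgF. Qed.

Lemma eqmod_trans x y z : eqmod S x y -> eqmod S y z -> eqmod S x z.
Proof. by move=> Sxy Syz; have := subgroupM subS Sxy Syz; rewrite divgKA. Qed.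

Lemma eqmod_mulr u x y : eqmod S x y -> eqmod S (x * u) (y * u).
Proof. by rewrite /eqmod mulgKA. Qed.

Lemma eqmod_mull_mem m x : S m -> eqmod S (m * x) x.
Proof. by rewrite /eqmod mulgK. Qed.

Lemma eqmod_mem x y : eqmod S x y -> S x <-> S y.
Proof.
move=> Sxy; split=> [Sx | Sy]; last by rewrite -(mulgVK y x); apply: subgroupM.
by rewrite -(mulgVK x y) -invgF; apply: subgroupM (subgroupV _ _) Sx.
Qed.

Hypothesis nS : normal S.

Lemma eqmod_conj u x y : eqmod S x y -> eqmod S (x ^ u) (y ^ u).
Proof. by rewrite /eqmod -conjVg -conjMg; apply: nS. Qed.

Lemma eqmod_mull u x y : eqmod S x y -> eqmod S (u * x) (u * y).
Proof. by move/(nS u^-1); rewrite /eqmod conjgE invgK invgM !mulgA. Qed.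

Lemma eqmod_inv x y : eqmod S x y -> eqmod S x^-1 y^-1.
Proof.
move/(subgroupV subS)/(nS y); rewrite invgF conjgE /eqmod invgK.
by rewrite -mulgA mulKg.
Qed.

Lemma eqmod_conj_mem m x : S m -> eqmod S (x ^ m) x.
Proof.
move=> Sm; rewrite /eqmod conjgE -!mulgA.
by apply: subgroupM (subgroupV _ Sm) _; have := nS x^-1 Sm; rewrite conjgE invgK.
Qed.

Lemma eqmod_conjr x d d' : eqmod S d d' -> eqmod S (x ^ d) (x ^ d').
Proof. by move=> Sdd'; rewrite -(mulgVK d' d) conjgM; apply/eqmod_conj/eqmod_conj_mem. Qed.

Lemma eqmod_conj_commg x y : eqmod S (x ^ y) x <-> S [~ x, y].
Proof.
rewrite commgEl; split=> [/(nS x) | /(nS x^-1)].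
  by rewrite [(_ / x) ^ x]conjgE mulgVK.
by rewrite [(x^-1 * _) ^ _]conjgE invgK -[x^-1 * _ / x]mulgA mulVKg.
Qed.

Lemma centralizer_mod_subgroup y : is_subgroup (fun x => eqmod S (x ^ y) x).
Proof.
split=> [|x z fx fz]; first by rewrite conj1g; apply: eqmod_refl.
rewrite conjMg conjVg; apply: eqmod_trans (eqmod_mulr _ fx) _.
exact/eqmod_mull/eqmod_inv.
Qed.

End Congruence.

Lemma derived_is_subgroup : is_subgroup (@derived_subgroup G).
Proof. exact: generated_subgroup. Qed.

Lemma derived_normal : normal (@derived_subgroup G).
Proof.
move=> u x /(generated_conj (u := u)); apply: generated_mono => _ [_ [p [q ->]] ->].
by exists (p ^ u), (q ^ u); rewrite conjRg.
Qed.

Definition derived_nongen c := derived_subgroup c /\ nongenerator c.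

Lemma derived_nongen_subgroup : is_subgroup derived_nongen.
Proof.
have [D1 DD] := derived_is_subgroup; have [N1 NN] := nongenerator_subgroup.
by split=> [|x y [Dx Nx] [Dy Ny]]; split; auto.
Qed.

Lemma derived_nongen_normal : normal derived_nongen.
Proof. by move=> u x [Dx Nx]; split; [apply: derived_normal | apply: nongenerator_normal]. Qed.

Lemma nongenerator_central_mod (s : seq G) f :
  generates (fun y => y \in s) -> derived_subgroup f ->
  (forall x, eqmod derived_nongen (x ^ f) x) -> nongenerator f.
Proof.
move=> gen_s Df central_f B gen_Bf.
pose K := generated (fun y => B y \/ derived_nongen y).
have subK : is_subgroup K by apply: generated_subgroup.
have BK b : B b -> K b by move=> Bb; apply: mem_generated; left.
have NK m : derived_nongen m -> K m by move=> Nm; apply: mem_generated; right.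
(* [K] is normalized by [B], which lies in [K], and by [f], which is central
   modulo [N <= K]; then [G/K] is abelian, so [f] lies in [G' <= K]. *)
have nK : normal K.
  have normalizes_K u : forall k, K (k ^ u) <-> K k.
    apply: generated_min (normalizer_subgroup K) _ (gen_Bf u) => a [/BK Ka | ->] k.
      split=> [Kka | Kk]; last exact: subgroupJ subK Kk Ka.
      by rewrite -(conjgK a k); apply: subgroupJ subK Kka (subgroupV subK Ka).
    by apply: (eqmod_mem subK); apply: NK (central_f k).
  by move=> u k /normalizes_K.
have commK x y : K [~ x, y].
  apply/(eqmod_conj_commg nK).
  apply: generated_min (centralizer_mod_subgroup subK nK y) _ (gen_Bf x) => a [/BK Ka | ->].
    exact: subgroupM subK (nK _ _ Ka) (subgroupV subK Ka).
  apply/(eqmod_conj_commg nK); rewrite -invgR; apply: (subgroupV subK); apply: NK.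
  exact/(eqmod_conj_commg derived_nongen_normal)/central_f.
have Kf : K f by apply: generated_min subK _ Df => _ [p [q ->]]; apply: commK.
apply: (fg_generates_remove_nongenerators gen_s).
apply: (generates_trans gen_Bf) => a [Ba | ->]; first by apply: mem_generated; left.
by apply: generated_mono Kf => y [By | [_ ng_y]]; [left | right].
Qed.

Lemma derived_nongen_free n (r : 'I_n -> G) (s : G) :
  generating_tuples r -> derived_subgroup s ->
  (forall i, eqmod derived_nongen (r i ^ s) (r i)) -> derived_nongen s.
Proof.
move=> gen_r Ds fixes_r; split=> //.
apply: (nongenerator_central_mod (s := codom r)) => // [|x].
  by apply: (generates_trans gen_r) => _ [i ->]; apply: mem_generated; apply: codom_f.
have centralizes_s := centralizer_mod_subgroup derived_nongen_subgroup derived_nongen_normal s.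
by apply: generated_min centralizes_s _ (gen_r x) => _ [i ->].
Qed.

Lemma generating_tuples_mul n (r w : 'I_n -> G) :
  generating_tuples r -> (forall i, nongenerator (w i)) ->
  generating_tuples (fun i => w i * r i).
Proof.
move=> gen_r ng_w; apply: (generates_remove_nongenerators (l := codom w)).
  by move=> _ /codomP[i ->].
apply: (generates_trans gen_r) => _ [i ->]; rewrite -[r i](mulKg (w i)).
apply: subgroupM (generated_subgroup _) (subgroupV (generated_subgroup _) _) _.
  by apply: mem_generated; right; apply: codom_f.
by apply: mem_generated; left; exists i.
Qed.

Lemma generating_tuples_conj n (r : 'I_n -> G) u :
  generating_tuples r -> generating_tuples (fun i => r i ^ u).
Proof.
move=> gen_r; apply: (generates_trans (generates_conj (u := u) gen_r)) => _ [_ [i ->] ->].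
by apply: mem_generated; exists i.
Qed.

End Generation.

Lemma inj_surj_bijective (A B : Type) (f : A -> B) :
  injective f -> (forall b, exists a, f a = b) -> bijective f.
Proof.
move=> f_inj f_surj; pose g b := proj1_sig (constructive_indefinite_description _ (f_surj b)).
have fgK : cancel g f by move=> b; rewrite /g; case: constructive_indefinite_description.
by exists g => // a; apply: f_inj; rewrite fgK.
Qed.

Section Counting.

Variables (G : groupType) (n : nat) (i0 : 'I_n) (D N : G -> Prop).
Hypotheses (subD : is_subgroup D) (subN : is_subgroup N) (nN : normal N).
Hypothesis ND : forall x, N x -> D x.
Hypothesis generating_mul : forall r w : 'I_n -> G,
  generating_tuples r -> (forall i, N (w i)) -> generating_tuples (fun i => w i * r i).
Hypothesis free_mod : forall (r : 'I_n -> G) s,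
  generating_tuples r -> D s -> (forall i, eqmod N (r i ^ s) (r i)) -> N s.

Implicit Types (r h k z : 'I_n -> G) (d s : G).

Definition conjugate_mod r h := exists2 d, D d & forall i, eqmod N (h i) (r i ^ d).

Lemma conjugate_mod_refl r : conjugate_mod r r.
Proof. by exists 1 => [|i]; [apply: subgroup1 | rewrite conjg1; apply: eqmod_refl]. Qed.

Lemma conjugate_mod_sym r h : conjugate_mod r h -> conjugate_mod h r.
Proof.
case=> d Dd hr; exists d^-1 => [|i]; first exact: subgroupV.
by apply: (eqmod_sym subN); have := eqmod_conj nN d^-1 (hr i); rewrite conjgK.
Qed.

Lemma conjugate_mod_trans r h k :
  conjugate_mod r h -> conjugate_mod h k -> conjugate_mod r k.
Proof.
case=> d Dd hr [e De kh]; exists (d * e) => [|i]; first exact: subgroupM.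
by rewrite conjgM; apply: (eqmod_trans subN (kh i)); apply: eqmod_conj.
Qed.

Lemma generating_conjugate_mod r h :
  conjugate_mod r h -> generating_tuples r -> generating_tuples h.
Proof.
case=> d _ hr gen_r; have -> : h = fun i => (h i / r i ^ d) * r i ^ d.
  by apply: functional_extensionality => i; rewrite mulgVK.
exact: generating_mul _ _ (generating_tuples_conj (u := d) gen_r) hr.
Qed.

Definition class_repr r := epsilon (inhabits r) (conjugate_mod r).

Lemma conjugate_mod_class_repr r : conjugate_mod r (class_repr r).
Proof. by apply: epsilon_spec; exists r; apply: conjugate_mod_refl. Qed.

Lemma class_repr_eq r h : conjugate_mod r h -> class_repr r = class_repr h.
Proof.
move=> rh; rewrite /class_repr (proof_irrelevance _ (inhabits r) (inhabits h)).
congr epsilon; apply: functional_extensionality => k; apply: propositional_extensionality.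
by split; apply: conjugate_mod_trans; [apply: conjugate_mod_sym |].
Qed.

Definition coset_repr d := epsilon (inhabits d) (fun s => D s /\ eqmod N d s).

Lemma coset_repr_spec d : D d -> D (coset_repr d) /\ eqmod N d (coset_repr d).
Proof.
move=> Dd; apply: (epsilon_spec _ (fun s => D s /\ eqmod N d s)).
by exists d; split; last apply: eqmod_refl.
Qed.

Lemma coset_repr_eq d d' : eqmod N d d' -> coset_repr d = coset_repr d'.
Proof.
move=> dd'; rewrite /coset_repr (proof_irrelevance _ (inhabits d) (inhabits d')).
congr epsilon; apply: functional_extensionality => s; apply: propositional_extensionality.
split=> -[Ds ds]; split=> //.
  exact: (eqmod_trans subN (eqmod_sym subN dd') ds).
exact: (eqmod_trans subN dd' ds).
Qed.

(* The [i0]-th entry carries the [N]-part [d / coset_repr d] of [d]: this is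
   how [G'/N] and one factor [N] of [N^n] combine into [G']. *)
Definition assemble_tuple d z r : 'I_n -> G :=
  fun i => (if i == i0 then d / coset_repr d else z i) * r i ^ coset_repr d.

Lemma assemble_tuple_eqmod d z r : D d -> (forall i, N (z i)) ->
  forall i, eqmod N (assemble_tuple d z r i) (r i ^ coset_repr d).
Proof.
move=> Dd Nz i; apply: eqmod_mull_mem; case: (i == i0) => //.
by case: (coset_repr_spec Dd).
Qed.

Lemma conjugate_mod_assemble_tuple d z r : D d -> (forall i, N (z i)) ->
  conjugate_mod r (assemble_tuple d z r).
Proof.
by move=> Dd Nz; exists (coset_repr d); [case: (coset_repr_spec Dd) | apply: assemble_tuple_eqmod].
Qed.

Lemma assemble_tuple_generating d z r : D d -> (forall i, N (z i)) ->
  generating_tuples r -> generating_tuples (assemble_tuple d z r).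
Proof.
move=> Dd Nz gen_r.
apply: generating_mul _ _ (generating_tuples_conj (u := coset_repr d) gen_r) _ => i.
by case: (i == i0) => //; case: (coset_repr_spec Dd).
Qed.

Lemma conjugator_unique_mod r s s' : generating_tuples r -> D s -> D s' ->
  (forall i, eqmod N (r i ^ s) (r i ^ s')) -> eqmod N s s'.
Proof.
move=> gen_r Ds Ds' rss'; apply: free_mod gen_r _ _ => [|i]; first exact: subD.2.
by have := eqmod_conj nN s'^-1 (rss' i); rewrite conjgK -conjgM.
Qed.

Lemma assemble_tuple_inj d d' z z' r r' :
  D d -> D d' -> (forall i, N (z i)) -> (forall i, N (z' i)) -> z i0 = 1 -> z' i0 = 1 ->
  generating_tuples r -> class_repr r = r -> class_repr r' = r' ->
  assemble_tuple d z r = assemble_tuple d' z' r' -> [/\ d = d', z = z' & r = r'].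
Proof.
move=> Dd Dd' Nz Nz' z0 z0' gen_r rr rr' eq_tuple.
have rr'_eq : r = r'.
  rewrite -rr -rr'; apply: class_repr_eq.
  apply: (conjugate_mod_trans (conjugate_mod_assemble_tuple r Dd Nz)).
  by rewrite eq_tuple; apply/conjugate_mod_sym/conjugate_mod_assemble_tuple.
subst r'.
have [Ds Nds] := coset_repr_spec Dd; have [Ds' Nds'] := coset_repr_spec Dd'.
have ss' : coset_repr d = coset_repr d'.
  apply: coset_repr_eq; apply: (eqmod_trans subN Nds).
  apply: (eqmod_trans subN _ (eqmod_sym subN Nds')).
  apply: conjugator_unique_mod gen_r Ds Ds' _ => i.
  apply: (eqmod_trans subN (eqmod_sym subN (assemble_tuple_eqmod r Dd Nz i))).
  by rewrite eq_tuple; apply: assemble_tuple_eqmod.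
have eq_factor i : (if i == i0 then d / coset_repr d else z i) =
                   (if i == i0 then d' / coset_repr d' else z' i).
  apply: (mulIg (r i ^ coset_repr d)).
  by have := congr1 (fun t => t i) eq_tuple; rewrite /assemble_tuple ss'.
have dd' : d = d' by have := eq_factor i0; rewrite eqxx ss' => /mulIg.
split=> //; apply: functional_extensionality => i; have := eq_factor i.
by case: eqP => [-> _ | _ //]; rewrite z0 z0'.
Qed.

Lemma assemble_tuple_surj h : generating_tuples h ->
  exists d z r, [/\ D d, (forall i, N (z i)), z i0 = 1,
    generating_tuples r /\ class_repr r = r & assemble_tuple d z r = h].
Proof.
move=> gen_h; have hr := conjugate_mod_class_repr h; set r := class_repr h in hr *.
have [d0 Dd0 rh] := conjugate_mod_sym hr.
have [Ds Nd0s] := coset_repr_spec Dd0; set s := coset_repr d0 in Ds Nd0s *.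
pose k i := h i / r i ^ s.
have Nk i : N (k i) by apply: (eqmod_trans subN (rh i)); apply: eqmod_conjr.
have es : coset_repr (k i0 * s) = s.
  apply: coset_repr_eq.
  exact: (eqmod_trans subN (eqmod_mull_mem _ (Nk i0)) (eqmod_sym subN Nd0s)).
exists (k i0 * s), (fun i => if i == i0 then 1 else k i), r; split.
- exact: subgroupM subD (ND (Nk i0)) Ds.
- by move=> i; case: (i == i0) => //; apply: subgroup1.
- by rewrite eqxx.
- by split; [apply: generating_conjugate_mod hr gen_h | apply/esym/class_repr_eq].
- apply: functional_extensionality => i; rewrite /assemble_tuple es.
  by case: eqP => [-> | _]; rewrite ?mulgK /k mulgVK.
Qed.

Theorem card_dvd_generating_tuples : card_dvd D (@generating_tuples G n).
Proof.
pose Z := {z : 'I_n -> G | (forall i, N (z i)) /\ z i0 = 1}.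
pose R := {r : 'I_n -> G | generating_tuples r /\ class_repr r = r}.
have gen_of (p : {d | D d} * (Z * R)) :
    generating_tuples (assemble_tuple (sval p.1) (sval p.2.1) (sval p.2.2)).
  by case: p => [[d Dd] [[z [Nz z0]] [r [gen_r rr]]]]; apply: assemble_tuple_generating.
exists (Z * R)%type, (fun p => exist _ _ (gen_of p)); apply: inj_surj_bijective.
  move=> [[d Dd] [[z [Nz z0]] [r [gen_r rr]]]].
  move=> [[d' Dd'] [[z' [Nz' z0']] [r' [gen_r' rr']]]] /(congr1 sval).
  case/(assemble_tuple_inj Dd Dd' Nz Nz' z0 z0' gen_r rr rr') => dd' zz' rr'_eq.
  by subst; do !f_equal; apply: proof_irrelevance.
move=> [h gen_h]; have [d [z [r [Dd Nz z0 [gen_r rr] hE]]]] := assemble_tuple_surj gen_h.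
exists (exist _ d Dd, (exist _ z (conj Nz z0), exist _ r (conj gen_r rr))).
by subst h; f_equal; apply: proof_irrelevance.
Qed.

End Counting.

Theorem mainTheorem5 (G : groupType) (n : nat) (hn : (0 < n)%N) :
  card_dvd (@derived_subgroup G) (@generating_tuples G n).
Proof.
apply: (@card_dvd_generating_tuples G n (Ordinal hn) _ (@derived_nongen G)).
- exact: derived_is_subgroup.
- exact: derived_nongen_subgroup.
- exact: derived_nongen_normal.
- by move=> x [].
- by move=> r w gen_r Nw; apply: generating_tuples_mul gen_r (fun i => (Nw i).2).
- exact: derived_nongen_free.
Qed.
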